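(* Let $X$ be a binary $N\times t$ matrix that is 3-good, let $S\subseteq[t]$ with $|S|=3$, $\mathbf{y}=r(X,S)$, $H=H(X,3,\mathbf{y})=([t],E)$, $L_1=\log_2\log_2 t$, $L_2=3L_1$. Let $G'=([t],E')$ be the graph in which distinct vertices $v_1,v_2$ are adjacent iff at least $L_2$ hyperedges of $E$ contain both. Let $E_1\subseteq E$ be the set of hyperedges containing some edge of $G'$ as a subset, $E_2=E\setminus E_1$, and $H_2=([t],E_2)$. Then: (1) every vertex of $H_2$ is contained in at most $2L_1L_2$ hyperedges of $E_2$; (2) $|E_2|$ is less than $6L_1L_2$ times the size of the largest $(3,0)$ configuration in $H_2$.
   Context: For a binary $N\times t$ matrix $X$ with columns $x(1),\dots,x(t)$ and $S\subseteq[t]$, $r(X,S)=\bigvee_{j\in S}x(j)$ (coordinatewise Boolean OR). For $\mathbf{y}\in\{0,1\}^N$, $H(X,3,\mathbf{y})$ is the $3$-uniform hypergraph on $[t]$ whose hyperedges are all $3$-element $S\subseteq[t]$ with $r(X,S)=\mathbf{y}$. A $(3,k)$ configuration of size $L$ is a set of $L$ hyperedges $e_1,\dots,e_L$ with a set $U$, $|U|=k$, such that $e_i\cap e_j=U$ for all $i\ne j$. Fix $p\in(0,1)$; $\Pr_1(s,w)$ is the probability that the OR of $s$ independent uniformly random length-$N$ binary columns of weight $\lfloor pN\rfloor$ equals a fixed vector of weight $w$; $\Pr_2(s,w_1,w)$ is the probability that the OR of $s$ such columns together with a fixed column $\mathbf{y}_1$ of weight $w_1$ equals a fixed vector $\mathbf{y}$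 of weight $w$ with $\mathbf{y}\vee\mathbf{y}_1=\mathbf{y}$. With $L_1=\log_2\log_2 t$, $X$ is 3-good if: (1) for every $\mathbf{y}$, $H(X,3,\mathbf{y})$ has no $(3,1)$ configuration of size $L_1$; (2) for every $\mathbf{y}$ with $|\mathbf{y}|=w$, $H(X,3,\mathbf{y})$ has no $(3,0)$ configuration of size $10\max(t^3\Pr_1(3,w),N)$; (3) for all $\mathbf{y},\mathbf{y}_1$ with $\mathbf{y}\vee\mathbf{y}_1=\mathbf{y}$, $|\mathbf{y}_1|=w_1$, $|\mathbf{y}|=w$, the number of $j$ with $\mathbf{y}_1\vee x(j)=\mathbf{y}$ is less than $10B(N,t)$, where $B(N,t)=t\Pr_2(1,w_1,w)$ if this exceeds $N$, $B(N,t)=N$ if $t^{-1/\sqrt{L_1}}\le t\Pr_2(1,w_1,w)\le N$, and $B(N,t)=L_1/10$ if $t\Pr_2(1,w_1,w)<t^{-1/\sqrt{L_1}}$; (4) for every $\mathbf{y}$ with $|\mathbf{y}|=w$ and integer $w_1\le w$, the number of pairwise disjoint pairs $\{j_1,j_2\}\subseteq[t]$ with $x(j_1)\vee x(j_2)\vee\mathbf{y}=\mathbf{y}$ and $|x(j_1)\vee x(j_2)|=w_1$ is less than $10\max(N,\binom{w}{w_1}t^2\Pr_1(2,w_1))$. *)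

From Stdlib Require Import Reals.
From mathcomp Require Import all_boot all_algebra.
Set Implicit Arguments.
Unset Strict Implicit.
Unset Printing Implicit Defensive.

Definition bvec (N : nat) := {ffun 'I_N -> bool}.

Definition wt N (v : bvec N) : nat := #|[set i | v i]|.

Definition bor N (u v : bvec N) : bvec N := [ffun i => u i || v i].

Definition column N t (X : 'M[bool]_(N, t)) (j : 'I_t) : bvec N := [ffun i => X i j].

Definition rOR N t (X : 'M[bool]_(N, t)) (S : {set 'I_t}) : bvec N :=
  [ffun i => [exists j in S, X i j]].

Definition Hedges N t (X : 'M[bool]_(N, t)) (y : bvec N) : {set {set 'I_t}} :=
  [set e : {set 'I_t} | (#|e| == 3) && (rOR X e == y)].

(* F is a (3,k) configuration (sunflower with kernel U, |U| = k); its size is #|F| *)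
Definition is_config t (k : nat) (F : {set {set 'I_t}}) : bool :=
  [exists U : {set 'I_t}, (#|U| == k) &&
     [forall e1 in F, forall e2 in F, (e1 != e2) ==> (e1 :&: e2 == U)]].

Definition cvec N (w : nat) : bvec N := [ffun i : 'I_N => (i < w)%N].

(* weight floor(pN) of the random columns *)
Definition colwt (p : R) (N : nat) : nat := Z.to_nat (Int_part (p * INR N)).

Definition borall N s (f : {ffun 'I_s -> bvec N}) : bvec N :=
  [ffun i => [exists k, f k i]].

(* Pr_1(s,w): probability that the OR of s independent uniform columns of weight
   floor(pN) equals a fixed vector of weight w (by symmetry, the canonical one). *)
Definition Pr1 (p : R) (N s w : nat) : R :=
  let k := colwt p N in
  Rdiv (INR #|[set f : {ffun 'I_s -> bvec N} |
            [forall a, wt (f a) == k] && (borall f == cvec N w)]|)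
       (INR #|[set f : {ffun 'I_s -> bvec N} | [forall a, wt (f a) == k]]|).

(* Pr_2(s,w1,w): same, with the OR also including a fixed y1 of weight w1, y1 <= y. *)
Definition Pr2 (p : R) (N s w1 w : nat) : R :=
  let k := colwt p N in
  Rdiv (INR #|[set f : {ffun 'I_s -> bvec N} |
            [forall a, wt (f a) == k] && (bor (cvec N w1) (borall f) == cvec N w)]|)
       (INR #|[set f : {ffun 'I_s -> bvec N} | [forall a, wt (f a) == k]]|).

Definition log2R (x : R) : R := Rdiv (ln x) (ln (INR 2)).
Definition L1 (t : nat) : R := log2R (log2R (INR t)).

(* B(N,t) as a function of x = t * Pr_2(1,w1,w) *)
Definition Bfun (N t : nat) (x : R) : R :=
  if Rlt_dec (INR N) x then x
  else if Rle_dec (Rpower (INR t) (Ropp (Rinv (sqrt (L1 t))))) x then INR N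
  else Rdiv (L1 t) (INR 10).

Definition good3 (p : R) N t (X : 'M[bool]_(N, t)) : Prop :=
  (forall (y : bvec N) (F : {set {set 'I_t}}),
      F \subset Hedges X y -> is_config 1 F -> Rlt (INR #|F|) (L1 t)) /\
  (forall (y : bvec N) (F : {set {set 'I_t}}),
      F \subset Hedges X y -> is_config 0 F ->
      Rlt (INR #|F|) (Rmult (INR 10) (Rmax (Rmult (pow (INR t) 3) (Pr1 p N 3 (wt y))) (INR N)))) /\
  (forall (y y1 : bvec N), bor y y1 = y ->
      Rlt (INR #|[set j : 'I_t | bor y1 (column X j) == y]|)
          (Rmult (INR 10) (Bfun N t (Rmult (INR t) (Pr2 p N 1 (wt y1) (wt y)))))) /\
  (forall (y : bvec N) (w1 : nat) (P : {set {set 'I_t}}), (w1 <= wt y)%N ->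
      (forall q, q \in P -> exists j1 j2 : 'I_t,
          [/\ j1 != j2, q = [set j1; j2],
              bor (bor (column X j1) (column X j2)) y = y &
              wt (bor (column X j1) (column X j2)) = w1]) ->
      (forall q1 q2, q1 \in P -> q2 \in P -> q1 != q2 -> [disjoint q1 & q2]) ->
      Rlt (INR #|P|) (Rmult (INR 10) (Rmax (INR N)
            (Rmult (Rmult (INR 'C(wt y, w1)) (pow (INR t) 2)) (Pr1 p N 2 w1))))).

From Stdlib Require Import Reals Lra.
From mathcomp Require Import all_boot all_algebra.

(* A maximal sunflower F with kernel U inside a k-uniform family D of sets
   containing U meets every member of D outside U, since a member avoiding all
   petals could be added to F.  Hence D is covered by the at most
   |F| (k - |U|) petal vertices, and |D| <= |F| (k - |U|) max_w deg_D(w).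
   For the edges of H_2 through v (kernel {v}) every petal vertex has codegree
   less than L_2 with v, as otherwise the edge would lie in E_1, and goodness
   (1) gives |F| < L_1; this is the degree bound 2 L_1 L_2.  With kernel set0
   and D = E_2 the same count gives |E_2| <= 3 |F| max_v deg(v). *)

Set Implicit Arguments.
Unset Strict Implicit.
Unset Printing Implicit Defensive.

Lemma card_bigcup_le (I T : finType) (P : pred I) (G : I -> {set T}) :
  #|\bigcup_(i | P i) G i| <= \sum_(i | P i) #|G i|.
Proof.
elim/big_ind2: _ => [|m A n B leAm leBn|//]; first by rewrite cards0.
apply: leq_trans (leq_card_setU A B).1 _; exact: leq_add.
Qed.

Section Sunflowers.
Variable T : finType.
Implicit Types (U e f : {set T}) (D F : {set {set T}}).

Definition sunflower U F :=
  [forall e1 in F, forall e2 in F, (e1 != e2) ==> (e1 :&: e2 == U)].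

Lemma sunflowerP U F :
  reflect {in F &, forall e1 e2, e1 != e2 -> e1 :&: e2 = U} (sunflower U F).
Proof.
apply: (iffP forall_inP) => [sfF e1 e2 e1F e2F ne | sfF e1 e1F].
  by move/forall_inP/(_ e2 e2F): (sfF e1 e1F); rewrite ne => /eqP.
by apply/forall_inP => e2 e2F; apply/implyP => ne; rewrite sfF.
Qed.

Lemma sunflower0 U : sunflower U set0.
Proof. by apply/sunflowerP => e1; rewrite inE. Qed.

Lemma sunflower1 U e : sunflower U [set e].
Proof. by apply/sunflowerP => e1 e2 /set1P-> /set1P->; rewrite eqxx. Qed.

Lemma sunflowerU1 U e F :
  sunflower U F -> {in F, forall f, e :&: f = U} -> sunflower U (e |: F).
Proof.
move=> /sunflowerP sfF meetU; apply/sunflowerP.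
move=> e1 e2 /setU1P[-> | e1F] /setU1P[-> | e2F]; rewrite ?eqxx // => ne.
- exact: meetU.
- by rewrite setIC meetU.
- exact: sfF.
Qed.

Definition degree D (v : T) := #|[set e in D | v \in e]|.

Definition codegree D (v w : T) := #|[set e in D | (v \in e) && (w \in e)]|.

Lemma degree_link D v w : degree [set e in D | v \in e] w = codegree D v w.
Proof. by apply: eq_card => e; rewrite !inE andbA. Qed.

Section MaximalSunflower.
Variables (k : nat) (U : {set T}) (D : {set {set T}}).
Hypothesis D_card : {in D, forall e, #|e| = k}.
Hypothesis D_kernel : {in D, forall e, U \subset e}.
Hypothesis U_small : #|U| < k.

Lemma maximal_sunflower_cover :
  exists2 F : {set {set T}}, (F \subset D) && sunflower U F &
    D \subset \bigcup_(w in \bigcup_(f in F) (f :\: U)) [set e in D | w \in e].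
Proof.
have sf0 : (set0 \subset D) && sunflower U set0 by rewrite sub0set sunflower0.
have [F /andP[FD sfF] maxF] :=
  @arg_maxnP _ set0 (fun F => (F \subset D) && sunflower U F) (fun F => #|F|) sf0.
exists F; first by rewrite FD.
apply/subsetP => e eD; apply: contraT => uncovered.
have meetU : {in F, forall f, e :&: f = U}.
  move=> f fF; have fD := subsetP FD f fF.
  apply/eqP; rewrite eqEsubset subsetI (D_kernel eD) (D_kernel fD) !andbT.
  apply/subsetP => x /setIP[xe xf]; move: uncovered; apply: contraR => xU.
  apply/bigcupP; exists x; last by rewrite inE eD.
  by apply/bigcupP; exists f; rewrite // inE xU.
have eF : e \notin F.
  by apply: contraL U_small => eF; rewrite -(meetU e eF) setIid D_card // ltnn.
have := maxF (e |: F); rewrite cardsU1 eF subUset sub1set eD FD sunflowerU1 //.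
by move=> /(_ isT) /=; rewrite add1n ltnn.
Qed.

Lemma card_le_sunflower_degree m :
  {in [predC U], forall w, degree D w <= m} ->
  exists2 F : {set {set T}}, (F \subset D) && sunflower U F &
    #|D| <= #|F| * (k - #|U|) * m.
Proof.
move=> deg_le; have [F /andP[FD sfF] cover] := maximal_sunflower_cover.
exists F; first by rewrite FD sfF.
set W := \bigcup_(f in F) (f :\: U).
have cardW : #|W| <= #|F| * (k - #|U|).
  rewrite -sum_nat_const; apply: leq_trans (card_bigcup_le _ _) _.
  apply: leq_sum => f fF; have fD := subsetP FD f fF.
  by rewrite cardsD (setIidPr (D_kernel fD)) D_card.
apply: leq_trans (subset_leq_card cover) _.
apply: leq_trans (card_bigcup_le _ _) _.
apply: (@leq_trans (\sum_(w in W) m)).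
  by apply: leq_sum => w /bigcupP[f _ /setDP[_ wU]]; apply: deg_le.
by rewrite sum_nat_const leq_mul.
Qed.

End MaximalSunflower.
End Sunflowers.

Lemma sunflower_is_config t (U : {set 'I_t}) (F : {set {set 'I_t}}) :
  sunflower U F -> is_config #|U| F.
Proof. by move=> sfF; apply/existsP; exists U; rewrite eqxx. Qed.

Lemma is_config0 t (F : {set {set 'I_t}}) : is_config 0 F = sunflower set0 F.
Proof.
apply/existsP/idP => [[U /andP[/eqP/cards0_eq -> //]] | sfF].
by exists set0; rewrite cards0 eqxx.
Qed.

Lemma INR_bigmax_lt (I : finType) (P : pred I) (F : I -> nat) (B : R) :
  Rlt 0 B -> (forall i, P i -> Rlt (INR (F i)) B) ->
  Rlt (INR (\max_(i | P i) F i)) B.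
Proof.
move=> B_gt0 F_lt; elim/big_ind: _ => [//|m n m_lt n_lt|i /F_lt //].
by rewrite /maxn; case: ifP.
Qed.

Section LightEdges.
Variables (T : finType) (E : {set {set T}}) (L1 L2 : R).
Implicit Types (v w : T) (e : {set T}) (F : {set {set T}}).
Hypothesis E_card : {in E, forall e, #|e| = 3}.
Hypothesis small_sunflower1 :
  forall v F, F \subset E -> sunflower [set v] F -> Rlt (INR #|F|) L1.
Hypothesis L2_gt0 : Rlt 0 L2.

Definition heavy_pair (v w : T) : bool :=
  (v != w) && (if Rle_dec L2 (INR (codegree E v w)) then true else false).

Definition light_edges : {set {set T}} :=
  E :\: [set e in E | [exists v in e, exists w in e, heavy_pair v w]].

Lemma light_edges_sub : light_edges \subset E.
Proof. exact: subsetDl. Qed.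

Lemma light_edge_not_heavy e :
  e \in light_edges -> {in e &, forall v w, ~~ heavy_pair v w}.
Proof.
rewrite !inE => /andP[+ eE]; rewrite eE /= => no_heavy v w ve we.
apply: contra no_heavy => heavy_vw.
by apply/exists_inP; exists v => //; apply/exists_inP; exists w.
Qed.

Lemma light_edges_card : {in light_edges, forall e, #|e| = 3}.
Proof. by move=> e /(subsetP light_edges_sub)/E_card. Qed.

Lemma light_codegree_lt v w : v != w -> Rlt (INR (codegree light_edges v w)) L2.
Proof.
move=> vw; rewrite /codegree.
case: (set_0Vmem [set e in light_edges | (v \in e) && (w \in e)]) => [-> | [e]].
  by rewrite cards0.
rewrite inE => /andP[/light_edge_not_heavy/(_ v w) + /andP[ve we]] => /(_ ve we).
rewrite /heavy_pair vw /=; case: Rle_dec => // /Rnot_le_lt codeg_lt _.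
apply: Rle_lt_trans codeg_lt; apply/le_INR/leP/subset_leq_card/subsetP => x.
by rewrite !inE => /andP[/andP[_ ->] ->].
Qed.

Lemma light_degree_lt v :
  Rlt (INR (degree light_edges v)) (Rmult (Rmult (INR 2) L1) L2).
Proof.
rewrite /degree; set D := [set e in light_edges | v \in e].
set m := \max_(w | w \notin [set v]) degree D w.
have m_lt : Rlt (INR m) L2.
  apply: INR_bigmax_lt => // w; rewrite in_set1 degree_link => wv.
  by apply: light_codegree_lt; rewrite eq_sym.
have DE : D \subset E.
  by rewrite /D setIdE (subset_trans (subsetIl _ _) light_edges_sub).
have D_card : {in D, forall e, #|e| = 3} by move=> e /(subsetP DE)/E_card.
have D_kernel : {in D, forall e, [set v] \subset e}.
  by move=> e /setIdP[_]; rewrite sub1set.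
have deg_le : {in [predC [set v]], forall w, degree D w <= m}.
  by move=> w wv; apply: leq_bigmax_cond.
have v_small : #|[set v]| < 3 by rewrite cards1.
have [F /andP[FD sfF]] := card_le_sunflower_degree D_card D_kernel v_small deg_le.
rewrite cards1 => /leP/le_INR; rewrite !mult_INR => card_le.
have F_lt := small_sunflower1 (subset_trans FD DE) sfF.
have := Rmult_le_0_lt_compat _ _ _ _ (pos_INR #|F|) (pos_INR m) F_lt m_lt.
rewrite /= in card_le *; lra.
Qed.

Lemma light_card_lt :
  light_edges != set0 ->
  Rlt (INR #|light_edges|)
    (Rmult (Rmult (Rmult (INR 6) L1) L2)
       (INR (\max_(F : {set {set T}} | (F \subset light_edges) && sunflower set0 F)
               #|F|))).
Proof.
case/set0Pn => e0 e0_light.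
have [v ve0] : exists v, v \in e0.
  by apply/card_gt0P; rewrite light_edges_card.
set M := \max_u degree light_edges u.
have M_lt : Rlt (INR M) (Rmult (Rmult (INR 2) L1) L2).
  apply: INR_bigmax_lt => [|u _]; last exact: light_degree_lt.
  have := light_degree_lt v; have := pos_INR (degree light_edges v); lra.
have deg_le : {in [predC set0], forall u, degree light_edges u <= M}.
  by move=> u _; apply: leq_bigmax.
have set0_small : #|@set0 T| < 3 by rewrite cards0.
have [F FS] :=
  card_le_sunflower_degree light_edges_card (fun e _ => sub0set e) set0_small deg_le.
set mx := \max_(F | _) _.
have F_le : #|F| <= mx by apply: leq_bigmax_cond.
have mx_ge1 : 1 <= mx.
  by apply: (bigmax_sup [set e0]); rewrite ?sub1set ?e0_light ?sunflower1 ?cards1.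
rewrite cards0 => /leP/le_INR; rewrite !mult_INR => card_le.
move: F_le mx_ge1 => /leP/le_INR F_le /leP/le_INR mx_ge1.
have := Rmult_le_compat_r _ _ _ (pos_INR M) F_le.
have := Rmult_lt_compat_l (INR mx) _ _ (Rlt_le_trans _ _ _ Rlt_0_1 mx_ge1) M_lt.
rewrite /= in card_le *; lra.
Qed.

End LightEdges.

Theorem lemma4 (p : R) (N t : nat) (X : 'M[bool]_(N, t)) (S : {set 'I_t}) :
  Rlt R0 p /\ Rlt p R1 ->
  good3 p X ->
  #|S| = 3 ->
  let y := rOR X S in
  let E := Hedges X y in
  let L2 := Rmult (INR 3) (L1 t) in
  let adj := fun v1 v2 : 'I_t =>
    (v1 != v2) &&
    (if Rle_dec L2 (INR #|[set e in E | (v1 \in e) && (v2 \in e)]|) then true else false) in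
  let E1 := [set e in E | [exists v1 in e, exists v2 in e, adj v1 v2]] in
  let E2 := E :\: E1 in
  (forall v : 'I_t, Rle (INR #|[set e in E2 | v \in e]|) (Rmult (Rmult (INR 2) (L1 t)) L2)) /\
  (E2 != set0 ->
   Rlt (INR #|E2|) (Rmult (Rmult (Rmult (INR 6) (L1 t)) L2)
      (INR (\max_(F : {set {set 'I_t}} | (F \subset E2) && is_config 0 F) #|F|)))).
Proof.
move=> _ [few_sunflowers1 _] card_S y E L2 adj E1 E2.
have E_card : {in E, forall e : {set 'I_t}, #|e| = 3}.
  by move=> e; rewrite inE => /andP[/eqP].
have small_sunflower1 v (F : {set {set 'I_t}}) :
    F \subset E -> sunflower [set v] F -> Rlt (INR #|F|) (L1 t).
  by move=> FE /sunflower_is_config; rewrite cards1; exact: few_sunflowers1 FE.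
have [s0 _] : exists s0, s0 \in S by apply/card_gt0P; rewrite card_S.
(* the empty family is a (3,1) configuration, so goodness (1) forces L1 > 0 *)
have L1_gt0 : Rlt 0 (L1 t).
  by have := small_sunflower1 s0 _ (sub0set E) (sunflower0 _); rewrite cards0.
have L2_gt0 : Rlt 0 L2 by rewrite /L2 /=; lra.
split => [v | E2_neq0].
  exact/Rlt_le/(light_degree_lt E_card small_sunflower1 L2_gt0).
rewrite (eq_bigl _ _ (fun F => congr1 (andb _) (is_config0 F))).
exact: light_card_lt.
Qed.
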